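(* Let $\mathcal{X}\subseteq\mathbb{R}^d$ be nonempty closed convex with $\mathbf{0}\in\mathcal{X}$ and diameter at most $D$, let $f_1,\dots,f_T:\mathcal{X}\to\mathbb{R}$ be convex differentiable with $\max_{\mathbf{x}\in\mathcal{X}}\|\nabla f_t(\mathbf{x})\|_2\le G$, and let $\Phi_t:\mathcal{X}\to\mathcal{X}$ satisfy $\|\Phi_t(\mathbf{x})-\Phi_t(\mathbf{x}')\|_2\le\|\mathbf{x}-\mathbf{x}'\|_2$ for all $t\in[T]$, $\mathbf{x},\mathbf{x}'\in\mathcal{X}$. Consider $\mathbf{x}_1\in\mathcal{X}$ and, for $t\ge1$, $\bar{\mathbf{x}}_{t+1}=\Pi_{\mathcal{X}}[\mathbf{x}_t-\eta\nabla f_t(\mathbf{x}_t)]$, $\mathbf{x}_{t+1}=\Phi_t(\bar{\mathbf{x}}_{t+1})$, with $\eta>0$. Then for any $\mathbf{u}_1,\dots,\mathbf{u}_{T+1}\in\mathcal{X}$, \[ \sum_{t=1}^T f_t(\mathbf{x}_t)-\sum_{t=1}^T f_t(\mathbf{u}_t)\le\frac{D^2}{2\eta}+\frac D\eta\sum_{t=1}^T\|\mathbf{u}_{t+1}-\Phi_t(\mathbf{u}_t)\|_2+\frac{\eta TG^2}{2}. \]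
   Context: $\Pi_{\mathcal{X}}$ is Euclidean projection onto $\mathcal{X}$; $f_t$ is revealed after $\mathbf{x}_t$ is played, and the maps $\Phi_t$ are given to the learner. *)

From Stdlib Require Import Reals.
From mathcomp Require Import all_boot.

Set Implicit Arguments.
Unset Strict Implicit.
Unset Printing Implicit Defensive.

Local Open Scope R_scope.

Definition vec (d : nat) := 'I_d -> R.

Definition Evadd d (u v : vec d) : vec d := fun i => u i + v i.
Definition Evsub d (u v : vec d) : vec d := fun i => u i - v i.
Definition Evscale d (a : R) (u : vec d) : vec d := fun i => a * u i.
Definition Evzero d : vec d := fun _ => 0.

Definition Edot d (u v : vec d) : R := \big[Rplus/0]_(i < d) (u i * v i).
Definition Enorm2 d (u : vec d) : R := sqrt (Edot u u).

Definition Econvex_set d (C : vec d -> Prop) : Prop :=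
  forall x y l, C x -> C y -> 0 <= l <= 1 ->
    C (Evadd (Evscale l x) (Evscale (1 - l) y)).

Definition Eclosed_set d (C : vec d -> Prop) : Prop :=
  forall y, ~ C y -> exists eps, 0 < eps /\
    forall z, Enorm2 (Evsub z y) < eps -> ~ C z.

Definition Ediam_le d (C : vec d -> Prop) (D : R) : Prop :=
  forall x y, C x -> C y -> Enorm2 (Evsub x y) <= D.

Definition Eis_proj d (C : vec d -> Prop) (y p : vec d) : Prop :=
  C p /\ forall z, C z -> Enorm2 (Evsub y p) <= Enorm2 (Evsub y z).

Definition Econvex_on d (C : vec d -> Prop) (f : vec d -> R) : Prop :=
  forall x y l, C x -> C y -> 0 <= l <= 1 ->
    f (Evadd (Evscale l x) (Evscale (1 - l) y)) <= l * f x + (1 - l) * f y.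

Definition Ehas_gradient d (f : vec d -> R) (x g : vec d) : Prop :=
  forall eps, 0 < eps -> exists delta, 0 < delta /\
    forall h, Enorm2 h < delta ->
      Rabs (f (Evadd x h) - f x - Edot g h) <= eps * Enorm2 h.

Definition EsumT (T : nat) (F : nat -> R) : R := \big[Rplus/0]_(1 <= t < T.+1) F t.

(* Write A t = |x_t - u_t|^2.  The proof is the classical one-step analysis
   followed by telescoping:
   - Euclidean facts on R^d: expansion of |a p + b q|^2, Cauchy-Schwarz and
     the triangle inequality;
   - the projection onto a convex set satisfies the variational inequality
     <z - p, p - u> >= 0, hence |p - u| <= |z - u| for every u in X;
   - a differentiable convex function lies above its tangent plane,
     f x - f u <= <grad f x, x - u>;
   - one round: the gradient step gives
       |xbar_{t+1} - u_t|^2 <= A t - 2 eta (f_t x_t - f_t u_t) + eta^2 G^2,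
     and the nonexpansive map Phi_t together with the diameter bound gives
       A (t+1) <= |xbar_{t+1} - u_t|^2 + 2 D |u_{t+1} - Phi_t u_t|;
   - summing these per-round bounds telescopes, with A 1 <= D^2, A (T+1) >= 0. *)
From HB Require Import structures.
From Stdlib Require Import Reals Lra Psatz FunctionalExtensionality.
From mathcomp Require Import all_boot.

Set Implicit Arguments.
Unset Strict Implicit.
Local Open Scope R_scope.

HB.instance Definition _ :=
  Monoid.isComLaw.Build R 0 Rplus
    (fun a b c => esym (Rplus_assoc a b c)) Rplus_comm Rplus_0_l.

Local Notation sqdist a b := (Edot (Evsub a b) (Evsub a b)).

Lemma big_Rmult_l (I : Type) (r : seq I) (P : pred I) (a : R) (F : I -> R) :
  \big[Rplus/0]_(i <- r | P i) (a * F i) = a * \big[Rplus/0]_(i <- r | P i) F i.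
Proof.
apply: (big_rec2 (fun x y => x = a * y)); first lra.
by move=> i x y _ ->; lra.
Qed.

Lemma Edot_ext d (u v u' v' : vec d) :
  (forall i, u i * v i = u' i * v' i) -> Edot u v = Edot u' v'.
Proof. by move=> H; apply: eq_bigr => i _; exact: H. Qed.

Lemma Edot_sym d (u v : vec d) : Edot u v = Edot v u.
Proof. by apply: Edot_ext => i; ring. Qed.

Lemma Edot_lin d (v p q w : vec d) (a b : R) :
  (forall i, v i = a * p i + b * q i) -> Edot v w = a * Edot p w + b * Edot q w.
Proof.
move=> H; rewrite /Edot -!big_Rmult_l -big_split.
by apply: eq_bigr => i _; rewrite H /=; ring.
Qed.

Lemma Edot_comb2 d (v p q : vec d) (a b : R) :
  (forall i, v i = a * p i + b * q i) ->
  Edot v v = a ^ 2 * Edot p p + 2 * a * b * Edot p q + b ^ 2 * Edot q q.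
Proof.
move=> H; rewrite (Edot_lin v H) (Edot_sym p v) (Edot_sym q v)
  (Edot_lin p H) (Edot_lin q H) (Edot_sym q p); ring.
Qed.

Lemma Edot_ge0 d (v : vec d) : 0 <= Edot v v.
Proof. by apply: big_ind => [|x y|i _]; [lra | lra | nra]. Qed.

Lemma Enorm2_ge0 d (v : vec d) : 0 <= Enorm2 v.
Proof. exact: sqrt_pos. Qed.

Lemma Enorm2_sq d (v : vec d) : Enorm2 v ^ 2 = Edot v v.
Proof. by rewrite /Enorm2 /= Rmult_1_r sqrt_sqrt //; exact: Edot_ge0. Qed.

Lemma Enorm2_le_sq d (a b : vec d) : Enorm2 a <= Enorm2 b -> Edot a a <= Edot b b.
Proof. by move=> H; rewrite -!Enorm2_sq; have := Enorm2_ge0 a; nra. Qed.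

Lemma Enorm2_scale d (l : R) (h : vec d) :
  0 <= l -> Enorm2 (Evscale l h) = l * Enorm2 h.
Proof.
move=> Hl; have E : Edot (Evscale l h) (Evscale l h) = l ^ 2 * Edot h h.
  by rewrite (@Edot_comb2 _ _ h h l 0) => [|i]; rewrite /Evscale; ring.
rewrite /Enorm2 E sqrt_mult; [| nra | exact: Edot_ge0].
by rewrite sqrt_pow2.
Qed.

Lemma Enorm2_sub_sym d (a b : vec d) : Enorm2 (Evsub a b) = Enorm2 (Evsub b a).
Proof. by rewrite /Enorm2; congr sqrt; apply: Edot_ext => i; rewrite /Evsub; ring. Qed.

Lemma quadratic_discriminant (A B C : R) :
  0 <= A -> 0 <= C -> (forall l, 0 <= A * l ^ 2 + 2 * B * l + C) -> B ^ 2 <= A * C.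
Proof.
move=> HA HC Hq; case: (Req_dec A 0) => [A0 | Anz].
- case: (Req_dec B 0) => [-> | Bnz]; first nra.
  have := Hq (- (C + 1) / (2 * B)).
  have -> : 2 * B * (- (C + 1) / (2 * B)) = - (C + 1) by field.
  rewrite A0; lra.
- have := Hq (- B / A).
  have -> : A * (- B / A) ^ 2 + 2 * B * (- B / A) + C = (A * C - B ^ 2) / A
    by field.
  move=> H; have HA' : 0 < A by lra.
  have : 0 <= (A * C - B ^ 2) / A * A by nra.
  by rewrite /Rdiv Rmult_assoc Rinv_l; lra.
Qed.

(* Cauchy-Schwarz, from the nonnegativity of |l a + b|^2 in l. *)
Lemma Cauchy_Schwarz d (a b : vec d) : Edot a b <= Enorm2 a * Enorm2 b.
Proof.
have Hdisc : Edot a b ^ 2 <= Edot a a * Edot b b.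
  apply: quadratic_discriminant; try exact: Edot_ge0.
  move=> l; have := Edot_ge0 (fun i => l * a i + 1 * b i).
  by rewrite (@Edot_comb2 _ _ a b l 1) //; lra.
rewrite -!Enorm2_sq in Hdisc.
have Hprod := Rmult_le_pos _ _ (Enorm2_ge0 a) (Enorm2_ge0 b).
apply: Rnot_lt_le => Hlt; nra.
Qed.

Lemma Enorm2_triangle d (w a b : vec d) :
  (forall i, w i = a i + b i) -> Enorm2 w <= Enorm2 a + Enorm2 b.
Proof.
move=> H.
have E : Edot w w = Edot a a + 2 * Edot a b + Edot b b.
  by rewrite (@Edot_comb2 _ w a b 1 1) => [|i]; [ring | rewrite H; ring].
have := Cauchy_Schwarz a b; have := Enorm2_sq w; have := Enorm2_sq a.
have := Enorm2_sq b; have := Enorm2_ge0 w; have := Enorm2_ge0 a.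
have := Enorm2_ge0 b; nra.
Qed.

Lemma nonneg_of_small_steps (c N : R) :
  0 <= N -> (forall l, 0 < l <= 1 -> 0 <= 2 * c * l + N * l ^ 2) -> 0 <= c.
Proof.
move=> HN Hl; case: (Rle_dec 0 c) => // /Rnot_le_lt Hc.
have Hpos : 0 < - c / (N - c) by apply: Rdiv_lt_0_compat; lra.
have Hle1 : - c / (N - c) <= 1.
  by apply: (Rmult_le_reg_r (N - c)); [lra | rewrite /Rdiv Rmult_assoc Rinv_l; lra].
have := Hl _ (conj Hpos Hle1).
have -> : 2 * c * (- c / (N - c)) + N * (- c / (N - c)) ^ 2
  = - (c ^ 2 * (N - 2 * c) / (N - c) ^ 2) by field; lra.
have : 0 < c ^ 2 * (N - 2 * c) / (N - c) ^ 2.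
  have Hc2 : 0 < c ^ 2 by nra.
  have HNc : 0 < (N - c) ^ 2 by apply: pow_lt; lra.
  by apply: Rdiv_lt_0_compat => //; apply: Rmult_lt_0_compat; lra.
lra.
Qed.

Lemma proj_variational d (X : vec d -> Prop) (z p u : vec d) :
  Econvex_set X -> Eis_proj X z p -> X u -> 0 <= Edot (Evsub z p) (Evsub p u).
Proof.
move=> Hcvx [Xp Hmin] Xu.
apply: (@nonneg_of_small_steps _ (sqdist p u)); first exact: Edot_ge0.
move=> l [Hl0 Hl1].
have Xw := Hcvx u p l Xu Xp (conj (Rlt_le _ _ Hl0) Hl1).
have := Enorm2_le_sq (Hmin _ Xw).
set w := Evadd (Evscale l u) (Evscale (1 - l) p).
rewrite (@Edot_comb2 _ (Evsub z w) (Evsub z p) (Evsub p u) 1 l) => [|i].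
  by lra.
by rewrite /w /Evsub /Evadd /Evscale; ring.
Qed.

Lemma proj_closer d (X : vec d -> Prop) (z p u : vec d) :
  Econvex_set X -> Eis_proj X z p -> X u -> sqdist p u <= sqdist z u.
Proof.
move=> Hcvx Hp Xu; have := proj_variational Hcvx Hp Xu.
rewrite (@Edot_comb2 _ (Evsub z u) (Evsub z p) (Evsub p u) 1 1) => [|i].
  by have := Edot_ge0 (Evsub z p); lra.
by rewrite /Evsub; ring.
Qed.

Lemma directional_lower_bound d (f : vec d -> R) (x g h : vec d) (eps : R) :
  Ehas_gradient f x g -> 0 < eps ->
  exists l, 0 < l <= 1 /\ l * (Edot g h - eps) <= f (Evadd x (Evscale l h)) - f x.
Proof.
move=> Hgrad Heps; set N := Enorm2 h; have HN : 0 <= N := Enorm2_ge0 h.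
have Heps' : 0 < eps / (N + 1) by apply: Rdiv_lt_0_compat; lra.
have [delta [Hdelta Hnear]] := Hgrad _ Heps'.
set l := Rmin 1 (delta / (N + 1)); exists l.
have Hl0 : 0 < l by apply: Rmin_glb_lt; [lra | apply: Rdiv_lt_0_compat; lra].
have HlN : l * (N + 1) <= delta.
  have -> : delta = delta / (N + 1) * (N + 1) by field; lra.
  by apply: Rmult_le_compat_r; [lra | exact: Rmin_r].
have Nlh : Enorm2 (Evscale l h) = l * N by apply: Enorm2_scale; lra.
have Eglh : Edot g (Evscale l h) = l * Edot g h.
  by rewrite Edot_sym (@Edot_lin _ _ h h g l 0) => [|i];
    [rewrite Edot_sym; ring | rewrite /Evscale; ring].
have Hexp := Hnear (Evscale l h) ltac:(rewrite Nlh; nra).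
rewrite Eglh Nlh in Hexp.
have Hlow := Rle_abs (- (f (Evadd x (Evscale l h)) - f x - l * Edot g h)).
rewrite Rabs_Ropp in Hlow.
have Hfrac : eps / (N + 1) * N <= eps.
  have -> : eps / (N + 1) * N = eps - eps / (N + 1) by field; lra.
  lra.
split; [split; [lra | exact: Rmin_l] | nra].
Qed.

Lemma convex_gradient_ineq d (X : vec d -> Prop) (f : vec d -> R) (x u g : vec d) :
  Econvex_on X f -> X x -> X u -> Ehas_gradient f x g ->
  f x - f u <= Edot g (Evsub x u).
Proof.
move=> Hcvx Xx Xu Hgrad; set h := Evsub u x.
have Egh : Edot g (Evsub x u) = - Edot g h.
  by rewrite Edot_sym (@Edot_lin _ _ h h g (-1) 0) => [|i];
    [rewrite Edot_sym; ring | rewrite /h /Evsub; ring].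
suff : Edot g h <= f u - f x by lra.
apply: Rle_plus_epsilon => eps Heps.
have [l [[Hl0 Hl1] Hlow]] := directional_lower_bound h Hgrad Heps.
(* x + l h lies on the segment from x to u, where f is below its chord *)
have Hseg : f (Evadd x (Evscale l h)) <= l * f u + (1 - l) * f x.
  have -> : Evadd x (Evscale l h) = Evadd (Evscale l u) (Evscale (1 - l) x).
    by apply: functional_extensionality => i; rewrite /h /Evadd /Evscale /Evsub; ring.
  exact: Hcvx u x l Xu Xx (conj (Rlt_le _ _ Hl0) Hl1).
have Hstep : l * (Edot g h - eps) <= l * (f u - f x) by lra.
have := Rmult_le_reg_l _ _ _ Hl0 Hstep; lra.
Qed.

Lemma projected_gradient_step d (X : vec d -> Prop) (f : vec d -> R)
    (x g p u : vec d) (eta G : R) :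
  0 < eta -> Econvex_set X -> Econvex_on X f -> X x -> X u ->
  Ehas_gradient f x g -> Enorm2 g <= G ->
  Eis_proj X (Evsub x (Evscale eta g)) p ->
  sqdist p u <= sqdist x u - 2 * eta * (f x - f u) + eta ^ 2 * G ^ 2.
Proof.
move=> Heta Hcvx Hf Xx Xu Hgrad HG Hp; have Hcl := proj_closer Hcvx Hp Xu.
have Hexp : sqdist (Evsub x (Evscale eta g)) u
    = sqdist x u - 2 * eta * Edot g (Evsub x u) + eta ^ 2 * Edot g g.
  rewrite (@Edot_comb2 _ _ (Evsub x u) g 1 (- eta)) => [|i].
    by rewrite (Edot_sym (Evsub x u) g); ring.
  by rewrite /Evsub /Evscale; ring.
have Htan : 2 * eta * (f x - f u) <= 2 * eta * Edot g (Evsub x u).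
  by apply: Rmult_le_compat_l; [lra | exact: convex_gradient_ineq Hf Xx Xu Hgrad].
have Hgg : eta ^ 2 * Edot g g <= eta ^ 2 * G ^ 2.
  apply: Rmult_le_compat_l; first nra.
  by rewrite -Enorm2_sq; have := Enorm2_ge0 g; nra.
lra.
Qed.

Lemma nonexpansive_drift d (X : vec d -> Prop) (Phi : vec d -> vec d)
    (D : R) (p u u' : vec d) :
  Ediam_le X D -> (forall y, X y -> X (Phi y)) ->
  (forall y y', X y -> X y' ->
     Enorm2 (Evsub (Phi y) (Phi y')) <= Enorm2 (Evsub y y')) ->
  X p -> X u -> X u' ->
  sqdist (Phi p) u' <= sqdist p u + 2 * D * Enorm2 (Evsub u' (Phi u)).
Proof.
move=> Hdiam HPX HPL Xp Xu Xu'.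
have Hab : Enorm2 (Evsub (Phi p) u')
    <= Enorm2 (Evsub p u) + Enorm2 (Evsub u' (Phi u)).
  have := @Enorm2_triangle _ (Evsub (Phi p) u') (Evsub (Phi p) (Phi u))
    (Evsub (Phi u) u') ltac:(by move=> i; rewrite /Evsub; ring).
  rewrite (Enorm2_sub_sym (Phi u) u'); have := HPL _ _ Xp Xu; lra.
have HaD := Hdiam _ _ (HPX _ Xp) Xu'; have HbD := Hdiam _ _ Xp Xu.
rewrite -!Enorm2_sq.
have := Enorm2_ge0 (Evsub (Phi p) u'); have := Enorm2_ge0 (Evsub p u).
have := Enorm2_ge0 (Evsub u' (Phi u)); nra.
Qed.

Lemma EsumT_S (T : nat) (F : nat -> R) : EsumT T.+1 F = EsumT T F + F T.+1.
Proof. by rewrite /EsumT big_nat_recr. Qed.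

(* The regret of one round, in the form that telescopes: the potential
   |x - u|^2 decreases up to the gradient and drift terms. *)
Lemma one_round d (X : vec d -> Prop) (f : vec d -> R) (Phi : vec d -> vec d)
    (D G eta : R) (x g p u u' : vec d) :
  0 < eta -> Econvex_set X -> Ediam_le X D -> Econvex_on X f ->
  Ehas_gradient f x g -> Enorm2 g <= G ->
  (forall y, X y -> X (Phi y)) ->
  (forall y y', X y -> X y' ->
     Enorm2 (Evsub (Phi y) (Phi y')) <= Enorm2 (Evsub y y')) ->
  Eis_proj X (Evsub x (Evscale eta g)) p -> X x -> X u -> X u' ->
  f x - f u <= (sqdist x u - sqdist (Phi p) u') / (2 * eta)
               + D / eta * Enorm2 (Evsub u' (Phi u)) + eta * G ^ 2 / 2.
Proof.
move=> Heta Hcvx Hdiam Hf Hgrad HG HPX HPL Hp Xx Xu Xu'.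
have Hgd := projected_gradient_step Heta Hcvx Hf Xx Xu Hgrad HG Hp.
have Hdr := nonexpansive_drift Hdiam HPX HPL Hp.1 Xu Xu'.
apply: (Rmult_le_reg_l (2 * eta)); first lra.
field_simplify; [nra | lra].
Qed.

Lemma telescoping_sum (T : nat) (F H b A : nat -> R) (c k : R) : 0 < c ->
  (forall t, (1 <= t <= T)%N -> F t - H t <= (A t - A t.+1) / c + b t + k) ->
  EsumT T F - EsumT T H <= (A 1%N - A T.+1) / c + EsumT T b + INR T * k.
Proof.
move=> Hc; elim: T => [|T IH] Hs.
  rewrite /EsumT !big_geq //=.
  have -> : (A 1%N - A 1%N) / c = 0 by field; lra.
  by rewrite /=; lra.
have IH' : EsumT T F - EsumT T H <= (A 1%N - A T.+1) / c + EsumT T b + INR T * k.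
  by apply: IH => t /andP [Ht1 HtT]; apply: Hs; rewrite Ht1 (leqW HtT).
have HT := Hs T.+1 ltac:(by rewrite leqnn).
rewrite !EsumT_S S_INR.
have -> : (A 1%N - A T.+2) / c = (A 1%N - A T.+1) / c + (A T.+1 - A T.+2) / c
  by field; lra.
lra.
Qed.

Theorem theorem6 (d : nat) (X : vec d -> Prop) (D G eta : R) (T : nat)
  (f : nat -> vec d -> R) (grad : nat -> vec d -> vec d)
  (Phi : nat -> vec d -> vec d)
  (x xbar u : nat -> vec d) :
  (exists x0 : vec d, X x0) ->
  Eclosed_set X -> Econvex_set X -> X (@Evzero d) -> Ediam_le X D ->
  (forall t, (1 <= t <= T)%N ->
     Econvex_on X (f t) /\
     (forall y, X y -> Ehas_gradient (f t) y (grad t y)) /\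
     (forall y, X y -> Enorm2 (grad t y) <= G)) ->
  (forall t, (1 <= t <= T)%N ->
     (forall y, X y -> X (Phi t y)) /\
     (forall y y', X y -> X y' ->
        Enorm2 (Evsub (Phi t y) (Phi t y')) <= Enorm2 (Evsub y y'))) ->
  0 < eta ->
  X (x 1%N) ->
  (forall t, (1 <= t <= T)%N ->
     Eis_proj X (Evsub (x t) (Evscale eta (grad t (x t)))) (xbar t.+1) /\
     x t.+1 = Phi t (xbar t.+1)) ->
  (forall t, (1 <= t <= T.+1)%N -> X (u t)) ->
  EsumT T (fun t => f t (x t)) - EsumT T (fun t => f t (u t))
  <= D ^ 2 / (2 * eta)
     + D / eta * EsumT T (fun t => Enorm2 (Evsub (u t.+1) (Phi t (u t))))
     + eta * INR T * G ^ 2 / 2.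
Proof.
move=> _ _ Hcvx _ Hdiam Hf HPhi Heta Hx1 Hstep Hu.
have Xx : forall t, (1 <= t <= T.+1)%N -> X (x t).
  case=> [//|[//|t]] /andP [_ Ht]; have [[Xp _] ->] := Hstep t.+1 Ht.
  exact: (HPhi t.+1 Ht).1.
set A := fun t => sqdist (x t) (u t).
set dev := fun t => Enorm2 (Evsub (u t.+1) (Phi t (u t))).
have Hround : forall t, (1 <= t <= T)%N -> f t (x t) - f t (u t)
    <= (A t - A t.+1) / (2 * eta) + D / eta * dev t + eta * G ^ 2 / 2.
  move=> t Ht; have /andP [Ht1 HtT] := Ht.
  have Xt : (1 <= t <= T.+1)%N by rewrite Ht1 leqW.
  have [Hft [Hgt HGt]] := Hf t Ht; have [HPX HPL] := HPhi t Ht.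
  have [Hp Hnext] := Hstep t Ht; rewrite /A /dev Hnext.
  exact: one_round Heta Hcvx Hdiam Hft (Hgt _ (Xx t Xt)) (HGt _ (Xx t Xt))
    HPX HPL Hp (Xx t Xt) (Hu t Xt) (Hu t.+1 HtT).
have := telescoping_sum (Rmult_lt_0_compat 2 eta ltac:(lra) Heta) Hround.
rewrite /EsumT big_Rmult_l -/(EsumT T dev).
have HA1 : A 1%N <= D ^ 2.
  by rewrite /A -Enorm2_sq; have := Enorm2_ge0 (Evsub (x 1%N) (u 1%N));
    have := Hdiam _ _ Hx1 (Hu 1%N isT); nra.
have HAT : 0 <= A T.+1 := Edot_ge0 _.
have : (A 1%N - A T.+1) / (2 * eta) <= D ^ 2 / (2 * eta).
  by apply: Rmult_le_compat_r; [apply: Rlt_le; apply: Rinv_0_lt_compat |]; lra.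
lra.
Qed.
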